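(* Let $d \geq 2$ and $n$ be positive integers. Let $\mathcal{S}_{n,d}$ be the family of all maximal spherical sets of $[n]^d$. Then the VC-dimension of the set system $([n]^d, \mathcal{S}_{n,d})$ is at most $d+1$.
   Context: $[n]=\{1,\dots,n\}$. A sphere is a $(d-1)$-dimensional sphere in $\mathbb{R}^d$. A subset $A \subset [n]^d$ is a maximal spherical set of $[n]^d$ if all points of $A$ lie on a single sphere $S$ in $\mathbb{R}^d$ and no point of $[n]^d$ can be added to $A$ while keeping all points on $S$ (i.e. $A = S \cap [n]^d$ for some sphere $S$). For a set system $\mathcal{F}$ on ground set $P$, a set $T \subset P$ is shattered if for every $B \subset T$ there is $F \in \mathcal{F}$ with $F \cap T = B$; the VC-dimension is the largest size of a shattered subset of $P$. *)

From HB Require Import structures.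
From mathcomp Require Import all_boot all_order all_algebra.
From mathcomp Require Import reals.
Set Implicit Arguments. Unset Strict Implicit. Unset Printing Implicit Defensive.
Import Order.TTheory GRing.Theory Num.Theory.
Local Open Scope ring_scope.

(* A point of the grid [n]^d : coordinate i is the integer (x i) + 1 in {1..n}. *)
Definition gridpt (n d : nat) := {ffun 'I_d -> 'I_n}.

Definition coord (R : realType) n d (x : gridpt n d) (i : 'I_d) : R :=
  ((nat_of_ord (x i)).+1)%:R.

Definition on_sphere (R : realType) n d (c : 'I_d -> R) (r : R) (x : gridpt n d) : bool :=
  \sum_(i < d) (coord R x i - c i) ^+ 2 == r ^+ 2.

Definition maximal_spherical (R : realType) n d (A : {set gridpt n d}) : Prop :=
  exists (c : 'I_d -> R) (r : R), 0 < r /\ A = [set x | on_sphere c r x].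

Definition shattered (T : finType) (F : {set T} -> Prop) (X : {set T}) : Prop :=
  forall B : {set T}, B \subset X -> exists A, F A /\ A :&: X = B.

Definition VC_dim_le (T : finType) (F : {set T} -> Prop) (k : nat) : Prop :=
  forall X : {set T}, shattered F X -> (#|X| <= k)%N.

From Pilot Require Import Defs.
From mathcomp Require Import all_boot all_order all_algebra.
From mathcomp Require Import reals.
From mathcomp Require Import ring.
Set Implicit Arguments. Unset Strict Implicit. Unset Printing Implicit Defensive.
Import Order.TTheory GRing.Theory Num.Theory.
Local Open Scope ring_scope.

(* Lifting x to (x, |x|^2, 1) in R^(d+2) turns every sphere into the trace of a
   hyperplane through the origin.  If X is shattered, each point of X is cut off
   from the others by such a hyperplane, so the lifted points of X are linearly
   independent; yet X itself lies on a sphere, so they all lie in one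
   hyperplane.  Hence |X| < d + 2. *)

Lemma sub_shattered (T : finType) (F G : {set T} -> Prop) (X : {set T}) :
  (forall A, F A -> G A) -> shattered F X -> shattered G X.
Proof. by move=> FG shX B /shX [A [/FG GA AX]]; exists A. Qed.

Section RankBounds.
Variables (K : fieldType) (k m : nat).
Implicit Types (M : 'M[K]_(k, m)) (w : 'cV[K]_m).

Lemma row_free_separated M :
  (forall i, exists w, (row i M *m w) 0 0 != 0 /\
                       forall j, j != i -> (row j M *m w) 0 0 = 0) ->
  row_free M.
Proof.
move=> sep; apply: inj_row_free => u uM0; apply/rowP => i; rewrite mxE.
have [w [Miw0 Mjw0]] := sep i.
have : (u *m M *m w) 0 0 = 0 by rewrite uM0 mul0mx mxE.
rewrite [u *m M]mulmx_sum_row mulmx_suml summxE (bigD1 i) //= big1 => [|j ji].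
  rewrite addr0 -scalemxAl mxE => /eqP.
  by rewrite mulf_eq0 (negbTE Miw0) orbF => /eqP.
by rewrite -scalemxAl mxE Mjw0 ?mulr0.
Qed.

Lemma rank_lt_annihilated M w : w != 0 -> M *m w = 0 -> (\rank M < m)%N.
Proof.
move=> w0 Mw0; rewrite ltn_neqAle rank_leq_col andbT.
apply: contra w0 => full; apply/eqP/(row_full_inj full).
by rewrite Mw0 mulmx0.
Qed.

End RankBounds.

Section HyperplaneTraces.
Variables (K : fieldType) (T : finType) (m : nat) (phi : T -> 'rV[K]_m).

Definition hyperplane_trace (w : 'cV[K]_m) : {set T} :=
  [set x | (phi x *m w) 0 0 == 0].

Definition hyperplane_trace_family (A : {set T}) : Prop :=
  exists2 w, w != 0 & A = hyperplane_trace w.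

Lemma shattered_hyperplane_traces_lt (X : {set T}) :
  shattered hyperplane_trace_family X -> (#|X| < m)%N.
Proof.
move=> shX.
pose M := \matrix_(i < #|X|) phi (enum_val i).
have rowM i : row i M = phi (enum_val i) by rewrite rowK.
have /eqP <- : row_free M.
  apply: row_free_separated => i.
  have [|A [[w _ ->] Xw]] := shX (X :\ enum_val i); first exact: subD1set.
  have inXw x : x \in X -> (x \in hyperplane_trace w) = (x != enum_val i).
    by move=> xX; move/setP/(_ x): Xw; rewrite in_setI in_setD1 xX !andbT.
  exists w; rewrite !rowM; split => [|j ji].
    by move: (inXw _ (enum_valP i)); rewrite eqxx inE => /negbT.
  apply/eqP; rewrite rowM; move: (inXw _ (enum_valP j)).
  by rewrite (inj_eq enum_val_inj) ji inE.
have [A [[w w0 ->] Xw]] := shX X (subxx X).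
apply: (rank_lt_annihilated w0); apply/matrixP => i j; rewrite ord1 [RHS]mxE.
have : enum_val i \in hyperplane_trace w :&: X by rewrite Xw enum_valP.
by rewrite inE => /andP [/[!inE] /eqP]; rewrite -rowM -row_mul mxE.
Qed.

End HyperplaneTraces.

Section SphereLift.
Variables (R : realType) (n d : nat).

Definition sphere_lift (x : gridpt n d) : 'rV[R]_(d + 1 + 1) :=
  row_mx (row_mx (\row_i Defs.coord R x i)
                 (\row_(j < 1) \sum_i Defs.coord R x i ^+ 2))
         (\row_(j < 1) 1).

Definition sphere_normal (c : 'I_d -> R) (r : R) : 'cV[R]_(d + 1 + 1) :=
  col_mx (col_mx (\col_i (-2 * c i)) (\col_(j < 1) 1))
         (\col_(j < 1) (\sum_i c i ^+ 2 - r ^+ 2)).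

Lemma sphere_lift_normalE x c r :
  (sphere_lift x *m sphere_normal c r) 0 0 =
  \sum_i (Defs.coord R x i - c i) ^+ 2 - r ^+ 2.
Proof.
rewrite !mul_row_col !mxE !big_ord1 !mxE.
under eq_bigr do rewrite !mxE.
have -> : \sum_i (Defs.coord R x i - c i) ^+ 2 =
    \sum_i Defs.coord R x i * (-2 * c i) + \sum_i Defs.coord R x i ^+ 2
    + \sum_i c i ^+ 2.
  by rewrite -!big_split; apply: eq_bigr => i _ /=; ring.
ring.
Qed.

Lemma sphere_normal_neq0 c r : sphere_normal c r != 0.
Proof.
apply/negP => /eqP/matrixP/(_ (lshift 1 (rshift d 0)) 0).
by rewrite col_mxEu col_mxEd !mxE => /eqP; rewrite oner_eq0.
Qed.

Lemma maximal_spherical_hyperplane_trace (A : {set gridpt n d}) :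
  maximal_spherical R A -> hyperplane_trace_family sphere_lift A.
Proof.
move=> [c [r [_ ->]]].
exists (sphere_normal c r); first exact: sphere_normal_neq0.
by apply/setP => x; rewrite !inE sphere_lift_normalE subr_eq0.
Qed.

End SphereLift.

Theorem lemma2p2 (R : realType) (n d : nat) (hn : (0 < n)%N) (hd : (2 <= d)%N) :
  VC_dim_le (@maximal_spherical R n d) d.+1.
Proof.
move=> X /(sub_shattered (@maximal_spherical_hyperplane_trace R n d)).
by move/shattered_hyperplane_traces_lt; rewrite !addn1.
Qed.
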